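(* Let $C$ be a smooth projective curve of genus $g\ge1$ over $\mathbb{C}$, $P,Q,R\in C$ distinct, and $f$ a rational function with $\operatorname{div}(f)=NQ-NR$, $N\ge1$, $f(P)=1$. Let $C_{QR}=C\setminus\{Q,R\}$, and let $G\subset\pi_1(C_{QR},P)$ be the subgroup generated by the loops $\alpha_i={\alpha'_i}^N\beta_Q^{-m_i}$, $1\le i\le 2g$, described in the context. Then the abelianization of $G$ is isomorphic to the subgroup of index $N^{2g}$ of the abelianization of $\pi_1(C,P)$ given by multiplication by $N$: $$G/[G,G]\cong N\cdot\big(\pi_1(C,P)/[\pi_1(C,P),\pi_1(C,P)]\big).$$
   Context: The group $\pi_1(C_{QR},P)$ is free on $2g+1$ generators $\alpha'_1,\dots,\alpha'_{2g},\beta_Q$, where the $\alpha'_i$ are loops based at $P$ coming from the edges of the fundamental $4g$-gon of $C$ (so that their images under the inclusion $i:C_{QR}\hookrightarrow C$ are the standard generators of $\pi_1(C,P)$, subject to the single product-of-commutators relation), and $\beta_Q$ is a small simple loop around $Q$ based at $P$. The map $f:C_{QR}\to\mathbb{P}^1\setminus\{0,\infty\}$ induces $f_*:\pi_1(C_{QR},P)\to\pi_1(\mathbb{P}^1\setminus\{0,\infty\},1)\cong\mathbb{Z}=\langle\beta_0\rangle$, with $f_*(\beta_Q)=\beta_0^N$; define integers $m_i$ by $f_*(\alpha'_i)=\beta_0^{m_i}$, so that $\alpha_i={\alpha'_i}^N\beta_Q^{-m_i}$ lies in $\ker f_*$. *)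

From mathcomp Require Import all_boot all_order all_algebra.
Set Implicit Arguments. Unset Strict Implicit. Unset Printing Implicit Defensive.
Import GRing.Theory.

(* Free group on n generators, realized by words over letters (i, b):
   b = false is the generator x_i, b = true is its inverse x_i^-1.
   Two words represent the same free-group element iff their free
   reductions coincide. Product = concatenation, inverse = fg_inv. *)
Definition letter (n : nat) := ('I_n * bool)%type.
Definition word (n : nat) := seq (letter n).

Definition inv_letter n (x : letter n) : letter n := (x.1, ~~ x.2).

Fixpoint reduce n (w : word n) : word n :=
  match w with
  | [::] => [::]
  | x :: w' =>
      let r := reduce w' in
      match r with
      | y :: r' => if y == inv_letter x then r' else x :: r
      | [::] => [:: x]
      end
  end.

Definition fg_eq n (w1 w2 : word n) : bool := reduce w1 == reduce w2.
Definition fg_inv n (w : word n) : word n := rev (map (@inv_letter n) w).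
Definition fg_pow n (w : word n) (k : int) : word n :=
  match k with
  | Posz j => flatten (nseq j w)
  | Negz j => flatten (nseq j.+1 (fg_inv w))
  end.
Definition fg_gen n (i : 'I_n) : word n := [:: (i, false)].
Definition fg_comm n (x y : word n) : word n :=
  fg_inv x ++ fg_inv y ++ x ++ y.

Definition in_span n k (gens : 'I_k -> word n) (w : word n) : Prop :=
  exists s : seq ('I_k * bool),
    fg_eq w (flatten (map (fun p => if p.2 then fg_inv (gens p.1) else gens p.1) s)).

Definition in_comm n (H : word n -> Prop) (w : word n) : Prop :=
  exists s : seq ((word n * word n) * bool),
    (forall p, p \in s -> H p.1.1 /\ H p.1.2) /\
    fg_eq w (flatten (map (fun p => if p.2 then fg_inv (fg_comm p.1.1 p.1.2)
                                    else fg_comm p.1.1 p.1.2) s)).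

From mathcomp Require Import all_boot all_order all_algebra.
Set Implicit Arguments. Unset Strict Implicit. Unset Printing Implicit Defensive.
Import GRing.Theory Num.Theory.
Local Open Scope ring_scope.

(* Exponent sums of the letters alpha'_i, ignoring beta_Q, define a
   homomorphism from pi_1(C_QR, P) to Z^2g sending alpha_i to N e_i; hence G
   is mapped onto N Z^2g.  Its kernel on G is [G, G]: a word in the alpha_i
   with zero exponent sums contains some letter y together with y^-1, and
   y U y^-1 V = [y^-1, U^-1] (U V), so induction on the length applies. *)

Section FreeReduction.
Variable n : nat.
Implicit Types (x y : letter n) (u v w : word n).

Lemma inv_letterK : involutive (@inv_letter n).
Proof. by case=> i b; rewrite /inv_letter negbK. Qed.

Lemma inv_letter_neq x : inv_letter x != x.
Proof. by case: x => i []; rewrite /inv_letter xpair_eqE eqxx. Qed.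

Fixpoint reduced w : bool :=
  if w is x :: ((y :: _) as w') then (y != inv_letter x) && reduced w' else true.

Lemma reduced_reduce w : reduced (reduce w).
Proof.
elim: w => [|x w IH] //=.
case: (reduce w) IH => [|y r] //= red_yr.
case: ifP => [_ | /= -> //]; by case: r red_yr => //= z r /andP[].
Qed.

Lemma reduce_cancel x w : reduce (inv_letter x :: x :: w) = reduce w.
Proof.
have /= := reduced_reduce w.
case: (reduce w) => [|y r] /=; first by rewrite inv_letterK eqxx.
case: ifP => [/eqP -> | _ _]; last by rewrite inv_letterK eqxx.
by case: r => [|z r] //= /andP[/negbTE ->].
Qed.

Lemma reduce_catl u v w :
  reduce v = reduce w -> reduce (u ++ v) = reduce (u ++ w).
Proof. by elim: u => [|x u IH] //= /IH ->. Qed.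

Lemma fg_inv_cat u v : fg_inv (u ++ v) = fg_inv v ++ fg_inv u.
Proof. by rewrite /fg_inv map_cat rev_cat. Qed.

Lemma fg_invK : involutive (@fg_inv n).
Proof.
by move=> w; rewrite /fg_inv map_rev revK -map_comp (eq_map inv_letterK) map_id.
Qed.

Lemma reduce_cancel_inv u w : reduce (fg_inv u ++ u ++ w) = reduce w.
Proof.
elim: u => [|x u IH] //.
rewrite -cat1s fg_inv_cat -!catA /=.
by rewrite (reduce_catl (fg_inv u) (reduce_cancel x (u ++ w))).
Qed.

Lemma fg_eq_trans u v w : fg_eq u v -> fg_eq v w -> fg_eq u w.
Proof. by rewrite /fg_eq => /eqP -> /eqP ->. Qed.

Lemma in_comm_fg_eq (H : word n -> Prop) u v :
  fg_eq u v -> in_comm H v -> in_comm H u.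
Proof. by move=> uv [s [sH vs]]; exists s; split=> //; apply: fg_eq_trans vs. Qed.

End FreeReduction.

Definition unit_rV k (i : nat) : 'rV[int]_k := \row_(j < k) (i == j)%:R.

Lemma unit_rV_ord k (j : 'I_k) : unit_rV k j = delta_mx 0 j.
Proof. by apply/rowP => j'; rewrite !mxE eqxx eq_sym. Qed.

Lemma unit_rV_out k i : (k <= i)%N -> unit_rV k i = 0.
Proof.
by move=> le_ki; apply/rowP => j; rewrite !mxE gtn_eqF // (leq_trans _ le_ki).
Qed.

(* Letters of index >= k, such as beta_Q, are sent to 0. *)
Definition abel n k (w : word n) : 'rV[int]_k :=
  \sum_(x <- w) (-1) ^+ x.2 *: unit_rV k x.1.

Section Abelianization.
Variables n k : nat.
Implicit Types (u v w : word n).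
Local Notation abel := (@abel n k).

Lemma abel_cat u v : abel (u ++ v) = abel u + abel v.
Proof. exact: big_cat. Qed.

Lemma abel_flatten (ws : seq (word n)) : abel (flatten ws) = \sum_(w <- ws) abel w.
Proof. exact: big_flatten. Qed.

Lemma abel_fg_gen (i : 'I_n) : abel (fg_gen i) = unit_rV k i.
Proof. by rewrite /abel big_seq1 scale1r. Qed.

Lemma abel_fg_inv w : abel (fg_inv w) = - abel w.
Proof.
rewrite /abel /fg_inv big_rev big_map -sumrN.
by apply: eq_bigr => -[i []] _; rewrite /= ?expr0 ?expr1 ?scaleN1r ?scale1r ?opprK.
Qed.

Lemma abel_reduce w : abel (reduce w) = abel w.
Proof.
elim: w => [|x w IH] //=; rewrite -[x :: w]cat1s abel_cat -IH.
case: (reduce w) => [|y r]; first by rewrite -abel_cat.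
case: ifP => [/eqP -> | _]; last by rewrite -abel_cat.
rewrite -[inv_letter x :: r]cat1s abel_cat -[[:: inv_letter x]]/(fg_inv [:: x]).
by rewrite abel_fg_inv addNKr.
Qed.

Lemma abel_fg_eq u v : fg_eq u v -> abel u = abel v.
Proof. by move=> /eqP uv; rewrite -abel_reduce uv abel_reduce. Qed.

Lemma abel_fg_pow w (z : int) : abel (fg_pow w z) = z *: abel w.
Proof.
have abel_rep m u : abel (flatten (nseq m u)) = abel u *+ m.
  by rewrite abel_flatten big_nseq iter_addr addr0.
case: z => j; rewrite /fg_pow abel_rep; first by rewrite -natz scaler_nat.
by rewrite NegzE scaleNr -natz scaler_nat abel_fg_inv mulNrn.
Qed.

Lemma abel_fg_comm u v : abel (fg_comm u v) = 0.
Proof. by rewrite !abel_cat !abel_fg_inv [abel u + _]addrC addKr addNr. Qed.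

Lemma abel_in_comm (H : word n -> Prop) w : in_comm H w -> abel w = 0.
Proof.
case=> s [_ /abel_fg_eq ->]; rewrite abel_flatten big_map big1 //.
move=> -[[u v] []] _ /=.
  by rewrite abel_fg_inv abel_fg_comm oppr0.
exact: abel_fg_comm.
Qed.

End Abelianization.

Lemma abel_surj k (v : 'rV[int]_k) : exists s : word k, abel k s = v.
Proof.
exists (flatten [seq fg_pow (fg_gen j) (v 0 j) | j <- enum 'I_k]).
rewrite abel_flatten big_map big_enum /= [RHS]row_sum_delta.
by apply: eq_bigr => j _; rewrite abel_fg_pow abel_fg_gen unit_rV_ord.
Qed.

Section Substitution.
Variables (n K : nat) (gens : 'I_K -> word n).
Implicit Types (x : letter K) (s t : word K).

Definition gen_word x : word n := if x.2 then fg_inv (gens x.1) else gens x.1.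
Definition subst_word s : word n := flatten (map gen_word s).

Lemma subst_word_cat s t : subst_word (s ++ t) = subst_word s ++ subst_word t.
Proof. by rewrite /subst_word map_cat flatten_cat. Qed.

Lemma subst_word_cons x s : subst_word (x :: s) = gen_word x ++ subst_word s.
Proof. by []. Qed.

Lemma subst_word_in_span s : in_span gens (subst_word s).
Proof. by exists s; rewrite /fg_eq. Qed.

Lemma gen_word_inv x : gen_word (inv_letter x) = fg_inv (gen_word x).
Proof. by case: x => i []; rewrite /gen_word /= ?fg_invK. Qed.

Lemma fg_inv_subst_word s : fg_inv (subst_word s) = subst_word (fg_inv s).
Proof.
elim: s => [|x s IH] //.
rewrite -cat1s subst_word_cat !fg_inv_cat IH subst_word_cat.
by rewrite /subst_word /= cats0 gen_word_inv.
Qed.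

Lemma abel_subst_word k (c : int) :
    (forall i, abel k (gens i) = c *: unit_rV k i) ->
  forall s, abel k (subst_word s) = c *: abel k s.
Proof.
move=> abel_gens s; rewrite abel_flatten big_map [abel k s]/abel scaler_sumr.
apply: eq_bigr => -[i []] _; rewrite /gen_word /= ?abel_fg_inv abel_gens.
  by rewrite expr1 scaleN1r scalerN.
by rewrite expr0 scale1r.
Qed.

Lemma mem_inv_letter_abel_eq0 x s : abel K (x :: s) = 0 -> inv_letter x \in s.
Proof.
move=> abel0; apply: contraT => notin.
have coord t : inv_letter x \notin t ->
    abel K t 0 x.1 =
      (-1) ^+ x.2 * (count (fun y : letter K => (y.1 : nat) == x.1) t)%:R.
  elim: t => [|y t IH]; first by rewrite /abel big_nil mxE mulr0.
  rewrite in_cons negb_or => /andP[yx /IH]; rewrite -cat1s abel_cat mxE => ->.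
  rewrite /= natrD mulrDr; congr (_ + _).
  rewrite /abel big_seq1 !mxE.
  case: y yx => i b /= yx; case: eqP => [/val_inj ei | _]; last by rewrite !mulr0.
  move: yx; rewrite ei.
  by case: x {abel0 notin IH ei} => j [] /=; case: b; rewrite ?eqxx.
have := congr1 (fun v : 'rV[int]_K => v 0 x.1) abel0.
rewrite coord; last by rewrite in_cons negb_or notin inv_letter_neq.
by rewrite mxE /= eqxx => /eqP; rewrite mulf_eq0 signr_eq0 pnatr_eq0.
Qed.

Lemma abel_eq0_in_comm s :
  abel K s = 0 -> in_comm (in_span gens) (subst_word s).
Proof.
have [l] := ubnP (size s); elim: l s => // l IH [|x s] lt_s_l abel0.
  by exists [::].
have mem_x := mem_inv_letter_abel_eq0 abel0.
move: lt_s_l abel0; case/splitPr: mem_x => u v lt_s_l abel0.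
have abel_uv : abel K (u ++ v) = 0.
  move: abel0; rewrite -cat1s -[inv_letter x :: v]cat1s !abel_cat.
  by rewrite -[[:: inv_letter x]]/(fg_inv [:: x]) abel_fg_inv addrCA addNKr.
have [|t [t_comm uv_t]] := IH (u ++ v) _ abel_uv.
  move: lt_s_l; rewrite ltnS [X in (X < _)%N -> _]size_cat /= addnS.
  by rewrite size_cat => /ltnW.
set y := gen_word x; set U := subst_word u.
exists (((fg_inv y, fg_inv U), false) :: t); split.
  move=> p; rewrite in_cons => /predU1P[-> | /t_comm //]; split.
    by rewrite -gen_word_inv; exists [:: inv_letter x]; rewrite /fg_eq /= cats0.
  by rewrite fg_inv_subst_word; apply: subst_word_in_span.
rewrite /fg_eq /= /fg_comm !fg_invK -!catA.
rewrite !subst_word_cons subst_word_cat subst_word_cons.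
rewrite gen_word_inv -/y -/U; apply/eqP; do 3!apply: reduce_catl.
move/eqP: uv_t; rewrite subst_word_cat => /(reduce_catl (fg_inv U)) <-.
by rewrite reduce_cancel_inv.
Qed.

End Substitution.

Theorem mainTheorem4 (g N : nat) (hg : (1 <= g)%N) (hN : (1 <= N)%N)
    (m : 'I_(2 * g) -> int) :
  let alphaP (i : 'I_(2 * g)) : word (2 * g).+1 :=
    fg_gen (widen_ord (leqnSn (2 * g)) i) in
  let betaQ : word (2 * g).+1 := fg_gen ord_max in
  let alpha (i : 'I_(2 * g)) : word (2 * g).+1 :=
    fg_pow (alphaP i) (N%:Z) ++ fg_pow betaQ (- m i) in
  let G := in_span alpha in
  exists phi : word (2 * g).+1 -> 'rV[int]_(2 * g),
    (forall x y, G x -> G y -> phi (x ++ y) = phi x + phi y) /\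
    (forall x y, G x -> fg_eq x y -> phi x = phi y) /\
    (forall v : 'rV[int]_(2 * g),
        (exists x, G x /\ phi x = v) <-> (exists u : 'rV[int]_(2 * g), v = N%:Z *: u)) /\
    (forall x, G x -> (phi x = 0 <-> in_comm G x)).
Proof.
move=> alphaP betaQ alpha G; exists (abel (2 * g)).
have abel_alpha i : abel (2 * g) (alpha i) = N%:Z *: unit_rV (2 * g) i.
  rewrite abel_cat !abel_fg_pow !abel_fg_gen (unit_rV_out (leqnn _)).
  by rewrite scaler0 addr0.
have abel_G := abel_subst_word abel_alpha.
split; first by move=> x y _ _; apply: abel_cat.
split; first by move=> x y _; apply: abel_fg_eq.
split=> [v | x [s x_s]].
  split=> [[x [[s x_s] <-]] | [u ->]].
    by exists (abel _ s); rewrite (abel_fg_eq _ x_s) abel_G.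
  have [s <-] := abel_surj u.
  exists (subst_word alpha s); rewrite abel_G.
  by split=> //; apply: subst_word_in_span.
split=> [| /abel_in_comm //].
have N_neq0 : N%:Z != 0 by rewrite -natz pnatr_eq0 -lt0n.
rewrite (abel_fg_eq _ x_s) abel_G => /eqP.
rewrite scalemx_eq0 (negbTE N_neq0) => /eqP abel_s.
exact: in_comm_fg_eq x_s (abel_eq0_in_comm alpha abel_s).
Qed.
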